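(* Let $K$ be an infinite field and $n\ge 4$. Let $f\in K[x_1,\ldots,x_n]$ be of the form $f(x)=\lambda\,l_1(x)^{\alpha_1}\cdots l_k(x)^{\alpha_k}$, where $\lambda$ is a nonzero constant, $l_i(x)=\sum_{j=1}^n l_{ij}x_j$ are linear forms with $l_i$ not proportional to $l_j$ for $i\ne j$, and assume ( * ): the $k$ coefficients $l_{11},\ldots,l_{k1}$ are distinct and nonzero, and $l_{in}=1$ for all $i$. Then the following algorithm outputs a correct factorization of $f$ (equal to the given one up to a permutation of the factors): 1. For $j=2,\ldots,n-1$, let $g_j(x_1,x_j)=f\circ\pi_j$, where $\pi_j$ sends $x_n$ to $1$, leaves $x_1$ and $x_j$ unchanged and sets all other variables to $0$; compute the dense representation of each $g_j$ by interpolation. 2. Using a bivariate factorization algorithm, write each $g_j$ as $g_j(x_1,x_j)=\lambda\prod_{i=1}^k(a_{ij}x_1+b_{ij}x_j+1)^{\beta_{ij}}$. 3. Reorder the factors of the $g_j$ so that the tuples $(a_{1j},\ldots,a_{kj})$ are identical for all $j$, obtaining $g_j(x_1,x_j)=\lambda\prod_{i=1}^k(a_ix_1+c_{ij}x_j+1)^{\gamma_i}$ with exponents $\gamma_i$ independent of $j$. 4. Output $f(x_1,\ldots,x_n)=\lambda\prod_{i=1}^k(a_ix_1+c_{i2}x_2+\cdots+c_{i,n-1}x_{n-1}+x_n)^{\gamma_i}$.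
   Context: The bivariate factorization algorithm in step 2 returns the factorization of $g_j$ into irreducible factors with multiplicities over a field containing the coefficients of the $l_i$ (the statement includes the assertion that these factorizations have the displayed shape and that the reordering in step 3 is possible). *)

From HB Require Import structures.
From mathcomp Require Import all_boot all_order all_algebra.
From mathcomp Require Import mpoly.
Set Implicit Arguments. Unset Strict Implicit. Unset Printing Implicit Defensive.
Import GRing.Theory.
Local Open Scope ring_scope.

(* Variables x_1,...,x_n are indexed by 'I_n: x_1 = index 0, x_j = index j-1,
   x_n = index n-1. *)

Definition infinite_field (K : fieldType) : Prop :=
  forall s : seq K, exists x : K, x \notin s.

Definition linform (K : fieldType) (n : nat) (c : 'I_n -> K) : {mpoly K[n]} :=
  \sum_(m < n) c m *: 'X_m.

Definition prodlin (K : fieldType) (n k : nat) (lam : K)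
    (l : 'I_k -> 'I_n -> K) (alpha : 'I_k -> nat) : {mpoly K[n]} :=
  lam *: \prod_(i < k) (linform (l i)) ^+ alpha i.

Definition proportional (K : fieldType) (n : nat) (u v : 'I_n -> K) : Prop :=
  exists c : K, (forall m, u m = c * v m) \/ (forall m, v m = c * u m).

Definition mid_index (n : nat) (j : 'I_n) : bool := ((0 < val j) && (val j < n.-1))%N.

(* pi_j : x_1 |-> X_0, x_j |-> X_1, x_n |-> 1, other variables |-> 0, landing in
   the bivariate ring K[X_0, X_1] (X_0 plays x_1 and X_1 plays x_j). *)
Definition pi_tuple (K : fieldType) (n : nat) (j : 'I_n) : n.-tuple {mpoly K[2]} :=
  [tuple (if val m == 0%N then 'X_(0 : 'I_2)
          else if m == j then 'X_(1 : 'I_2)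
          else if val m == n.-1 then 1 else 0) | m < n].

Definition gproj (K : fieldType) (n : nat) (f : {mpoly K[n]}) (j : 'I_n) : {mpoly K[2]} :=
  f \mPo pi_tuple K j.

Definition mirreducible (K : fieldType) (d : nat) (p : {mpoly K[d]}) : Prop :=
  p != 0 /\ p \isn't a GRing.unit /\
  forall q r : {mpoly K[d]}, p = q * r -> q \is a GRing.unit \/ r \is a GRing.unit.

Definition massociated (K : fieldType) (d : nat) (p q : {mpoly K[d]}) : Prop :=
  exists c : K, c != 0 /\ p = c *: q.

Definition irr_factorization (K : fieldType) (d : nat) (g : {mpoly K[d]})
    (mu : K) (s : seq ({mpoly K[d]} * nat)) : Prop :=
  [/\ g = mu *: \prod_(pe <- s) pe.1 ^+ pe.2,
      forall pe, pe \in s -> mirreducible pe.1 /\ (0 < pe.2)%N &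
      forall i1 i2 : nat, (i1 < size s)%N -> (i2 < size s)%N -> i1 <> i2 ->
        ~ massociated (nth (0, 0%N) s i1).1 (nth (0, 0%N) s i2).1].

Definition lin2 (K : fieldType) (a b : K) : {mpoly K[2]} :=
  a *: 'X_(0 : 'I_2) + b *: 'X_(1 : 'I_2) + 1.

(* Coefficient vector of the output linear form of step 4:
   a x_1 + c_2 x_2 + ... + c_{n-1} x_{n-1} + x_n  (c indexed by 'I_n). *)
Definition outlin (K : fieldType) (n : nat) (a : K) (c : 'I_n -> K) : 'I_n -> K :=
  fun m => if val m == 0%N then a else if val m == n.-1 then 1 else c m.

(* Under ( * ), each g_j equals lam * prod_i (l_i1 x_1 + l_ij x_j + 1)^alpha_i, and these
   linear factors are pairwise non-associated primes of K[x_1, x_j]: in K[x_j][x_1] each one is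
   a unit times a monic linear polynomial, hence prime by the factor theorem. Irreducible
   factorizations of a product of pairwise non-associated primes are unique up to order and
   constants, so any output of step 2 is this factorization, and within it the factor coming
   from l_i is recognised, for every j, by its x_1-coefficient l_i1, which ( * ) makes distinct.
   Aligning the factors by that coefficient thus recovers every l_i and alpha_i. *)

From HB Require Import structures.
From mathcomp Require Import all_boot all_order all_algebra all_fingroup.
From mathcomp Require Import mpoly ring zify.
Set Implicit Arguments.
Unset Strict Implicit.
Unset Printing Implicit Defensive.
Import GRing.Theory.
Local Open Scope ring_scope.

Lemma nth_map_ord_enum (T : Type) (x0 : T) k (F : 'I_k -> T) (i : 'I_k) :
  nth x0 [seq F i | i <- enum 'I_k] i = F i.
Proof. by rewrite (nth_map i) ?size_enum_ord // nth_ord_enum. Qed.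

Section Divisibility.
Variable R : comUnitRingType.
Implicit Types p q u f x y : R.

Definition divides p q : Prop := exists r, q = p * r.

Definition prime_elt p : Prop :=
  [/\ p != 0, p \isn't a GRing.unit &
      forall x y, divides p (x * y) -> divides p x \/ divides p y].

Lemma divides_unit p u : u \is a GRing.unit -> divides p u -> p \is a GRing.unit.
Proof. by move=> Uu [r uE]; move: Uu; rewrite uE unitrM => /andP[]. Qed.

Lemma prime_ndvd_unit f u : prime_elt f -> u \is a GRing.unit -> ~ divides f u.
Proof. by case=> _ /negP nUf _ Uu /(divides_unit Uu). Qed.

Lemma prime_dvd_exp f x e : prime_elt f -> divides f (x ^+ e) -> divides f x.
Proof.
move=> pf; elim: e => [|e IHe]; first by rewrite expr0 => /(prime_ndvd_unit pf (unitr1 R)).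
by case: pf => _ _ pf; rewrite exprS => /pf [].
Qed.

Lemma prime_dvd_prod (I : eqType) (r : seq I) (P : pred I) (F : I -> R) f :
  prime_elt f -> divides f (\prod_(i <- r | P i) F i) ->
  exists i, [/\ i \in r, P i & divides f (F i)].
Proof.
move=> pf; elim: r => [|i r IHr]; first by rewrite big_nil => /(prime_ndvd_unit pf (unitr1 R)).
rewrite big_cons; case: ifP => Pi; last first.
  by case/IHr => j [jr Pj fFj]; exists j; rewrite inE jr orbT.
case: pf => _ _ /[apply] -[fFi|/IHr [j [jr Pj fFj]]]; first by exists i; rewrite mem_head.
by exists j; rewrite inE jr orbT.
Qed.

Lemma prime_eltMl u p : u \is a GRing.unit -> prime_elt p -> prime_elt (u * p).
Proof.
move=> Uu [p0 nUp pp]; split.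
- by apply/eqP => /(congr1 ( *%R u^-1)); rewrite mulKr // mulr0; apply/eqP.
- by rewrite unitrM Uu.
move=> x y [r xyE]; have /pp[] : divides p (x * y) by exists (u * r); rewrite xyE mulrCA mulrA.
  by case=> s ->; left; exists (u^-1 * s); rewrite mulrCA -mulrA mulKr.
by case=> s ->; right; exists (u^-1 * s); rewrite mulrCA -mulrA mulKr.
Qed.

End Divisibility.

Lemma prime_elt_retract (R S : comUnitRingType) (phi : {rmorphism R -> S})
    (psi : {rmorphism S -> R}) p :
  cancel phi psi -> prime_elt (phi p) -> prime_elt p.
Proof.
move=> phiK [phip0 nUphip pphip]; split.
- by apply: contraNneq phip0 => ->; rewrite rmorph0.
- by apply: contra nUphip => /(rmorph_unit phi).
move=> x y [r xyE].
have : divides (phi p) (phi x * phi y) by exists (phi r); rewrite -!rmorphM xyE.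
by case/pphip => -[s E]; [left|right]; exists (psi s); rewrite -[LHS]phiK E rmorphM phiK.
Qed.

Section DomainDivisibility.
Variable R : idomainType.
Implicit Types p q u f x y : R.

Lemma prime_irreducible p q r : prime_elt p -> p = q * r ->
  q \is a GRing.unit \/ r \is a GRing.unit.
Proof.
case=> p0 _ pp pE; have /pp[] : divides p (q * r) by exists 1; rewrite mulr1.
  case=> s qE; right; apply/unitrPr; exists s.
  by apply: (mulfI p0); rewrite mulr1 [RHS]pE qE -mulrA (mulrC s).
case=> s rE; left; apply/unitrPr; exists s.
by apply: (mulfI p0); rewrite mulr1 [RHS]pE rE mulrCA.
Qed.

Lemma irreducible_dvd_prime p f :
  (forall q r, p = q * r -> q \is a GRing.unit \/ r \is a GRing.unit) ->
  prime_elt f -> divides f p -> exists2 u, u \is a GRing.unit & p = f * u.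
Proof.
move=> irr_p [_ nUf _] [u pE]; exists u => //.
by case: (irr_p _ _ pE) => // Uf; rewrite Uf in nUf.
Qed.

Lemma prime_dvd_cofactor f p m e : prime_elt f ->
  divides p (f ^+ e * m) -> divides f p \/ divides p m.
Proof.
move=> [f0 _ pf]; elim: e => [|e IHe]; first by rewrite expr0 mul1r; right.
case=> q; rewrite exprS -mulrA => E.
have /pf[|[r qE]] : divides f (p * q) by rewrite -E; exists (f ^+ e * m).
  by left.
by apply: IHe; exists r; apply: (mulfI f0); rewrite E qE mulrCA.
Qed.

Lemma dvd_prod_primes (I : eqType) (r : seq I) (F : I -> R) (e : I -> nat) p u :
  p \isn't a GRing.unit -> u \is a GRing.unit -> (forall i, i \in r -> prime_elt (F i)) ->
  divides p (u * \prod_(i <- r) F i ^+ e i) -> exists2 i, i \in r & divides (F i) p.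
Proof.
move=> nUp Uu; elim: r => [|i r IHr] pF.
  by rewrite big_nil mulr1 => /(divides_unit Uu) Up; rewrite Up in nUp.
have pFi : prime_elt (F i) by apply: pF; rewrite mem_head.
rewrite big_cons mulrCA => /(prime_dvd_cofactor pFi) [Fip|]; first by exists i; rewrite ?mem_head.
case/IHr => [j jr|j jr Fjp]; first by apply: pF; rewrite inE jr orbT.
by exists j; rewrite // inE jr orbT.
Qed.

Lemma prime_multiplicity_uniq f a b q q' : prime_elt f ->
  ~ divides f q -> ~ divides f q' -> f ^+ a * q = f ^+ b * q' -> a = b.
Proof.
move=> pf; wlog ab : a b q q' / (a <= b)%N => [W nfq nfq' E|nfq nfq' E].
  by case: (leqP a b) => [|/ltnW] ba; [exact: W E | apply/esym/(W b a q' q)].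
have f0 : f != 0 by case: pf.
have qE : q = f ^+ (b - a) * q'.
  by apply: (mulfI (expf_neq0 a f0)); rewrite E mulrA -exprD subnKC.
case: (b - a)%N qE (subnKC ab) => [|c] qE; first by rewrite addn0.
by case: nfq; exists (f ^+ c * q'); rewrite qE exprS -mulrA.
Qed.

Lemma prime_ndvd_prod (I : eqType) (r : seq I) (P : pred I) (F : I -> R) e f :
  prime_elt f -> (forall i, P i -> ~ divides f (F i)) ->
  ~ divides f (\prod_(i <- r | P i) F i ^+ e i).
Proof.
by move=> pf nfF /(prime_dvd_prod pf) [i [_ Pi /(prime_dvd_exp pf)]]; apply: nfF.
Qed.

Lemma prod_primes_exp_inj (I : finType) (F : I -> R) (a b : I -> nat) :
  (forall i, prime_elt (F i)) -> (forall i j, divides (F i) (F j) -> i = j) ->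
  \prod_i F i ^+ a i = \prod_i F i ^+ b i -> a =1 b.
Proof.
move=> pF Finj E i.
have nFi c : ~ divides (F i) (\prod_(j | j != i) F j ^+ c j).
  by apply: prime_ndvd_prod => // j ji /Finj ij; rewrite ij eqxx in ji.
apply: (prime_multiplicity_uniq (pF i) (nFi a) (nFi b)).
by move: E; rewrite (bigD1 i) // [RHS](bigD1 i).
Qed.

End DomainDivisibility.

Section MpolyDivisibility.
Variables (K : fieldType) (d : nat).
Implicit Types p q r f g : {mpoly K[d]}.

Lemma mpoly_unitP p : p \is a GRing.unit -> exists2 c, c != 0 & p = c%:MP.
Proof.
case/andP => /eqP pE Up0; exists p@_0 => //.
by apply: contraTneq Up0 => ->; rewrite unitr0.
Qed.

Lemma mpolyC_unit (c : K) : c != 0 -> (c%:MP : {mpoly K[d]}) \is a GRing.unit.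
Proof. by move=> c0; apply/unitrPr; exists c^-1%:MP; rewrite -mpolyCM mulfV ?mpolyC1. Qed.

Lemma massociated_sym p q : massociated p q -> massociated q p.
Proof.
case=> c [c0 ->]; exists c^-1; split; first by rewrite invr_eq0.
by rewrite scalerA mulVf // scale1r.
Qed.

Lemma massociated_trans p q r : massociated p q -> massociated q r -> massociated p r.
Proof.
case=> c [c0 ->] [c' [c'0 ->]]; exists (c * c'); split; first by rewrite mulf_neq0.
by rewrite scalerA.
Qed.

Lemma prime_mirreducible p : prime_elt p -> mirreducible p.
Proof.
by move=> pp; case: (pp) => p0 nUp _; split; last split => // q r /(prime_irreducible pp).
Qed.

Lemma mirreducible_dvd_prime p f : mirreducible p -> prime_elt f -> divides f p ->
  massociated p f.
Proof.
case=> _ [_ irr_p] pf /(irreducible_dvd_prime irr_p pf) [u /mpoly_unitP [c c0 ->] ->].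
by exists c; rewrite mulrC mul_mpolyC.
Qed.

Lemma irr_factorization_dvd g mu s pe : irr_factorization g mu s -> pe \in s ->
  divides pe.1 g.
Proof.
case=> -> s_irr _ pe_s; have [_ /prednK eE] := s_irr _ pe_s.
exists (mu%:MP * (pe.1 ^+ pe.2.-1 * \prod_(pe' <- rem pe s) pe'.1 ^+ pe'.2)).
by rewrite (big_rem pe pe_s) /= -mul_mpolyC -{1}eE exprS; ring.
Qed.

End MpolyDivisibility.

Section UniqueFactorization.
Variables (K : fieldType) (d k : nat) (lam : K).
Variables (L : 'I_k -> {mpoly K[d]}) (alpha : 'I_k -> nat).
Hypotheses (lam0 : lam != 0) (alpha_gt0 : forall i, (0 < alpha i)%N).
Hypothesis L_prime : forall i, prime_elt (L i).
Hypothesis L_assoc_inj : forall i i', massociated (L i) (L i') -> i = i'.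
Local Notation g := (lam *: \prod_(i < k) L i ^+ alpha i).

Let L_dvd_inj i i' : divides (L i) (L i') -> i = i'.
Proof.
move/(mirreducible_dvd_prime (prime_mirreducible (L_prime i')) (L_prime i)).
by move/massociated_sym/L_assoc_inj.
Qed.

Lemma prod_factors_neq0 : g != 0.
Proof.
rewrite scaler_eq0 negb_or lam0 prodf_seq_neq0; apply/allP => i _.
by apply: expf_neq0; case: (L_prime i).
Qed.

Lemma mirreducible_dvd_factor p : mirreducible p -> divides p g ->
  exists i, massociated p (L i).
Proof.
move=> irr_p; have [_ [nUp _]] := irr_p; rewrite -mul_mpolyC.
case/(dvd_prod_primes nUp (mpolyC_unit d lam0) (fun i _ => L_prime i)) => i _ Lip.
by exists i; apply: mirreducible_dvd_prime.
Qed.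

Lemma irr_factorization_assoc mu s : irr_factorization g mu s ->
  forall i, exists2 pe, pe \in s & massociated pe.1 (L i).
Proof.
move=> [gE s_irr _] i.
have mu0 : mu != 0.
  by move: prod_factors_neq0; rewrite gE; apply: contraNneq => ->; rewrite scale0r.
have Lig : divides (L i) g.
  exists (lam%:MP * (L i ^+ (alpha i).-1 * \prod_(j | j != i) L j ^+ alpha j)).
  by rewrite (bigD1 i) //= -mul_mpolyC -{1}(prednK (alpha_gt0 i)) exprS; ring.
have [_ _ pLi] := L_prime i.
move: Lig; rewrite gE -mul_mpolyC => /pLi[|].
  by move/(prime_ndvd_unit (L_prime i) (mpolyC_unit d mu0)).
case/(prime_dvd_prod (L_prime i)) => pe [pe_s _ /(prime_dvd_exp (L_prime i)) Lpe].
by exists pe => //; apply: mirreducible_dvd_prime => //; case: (s_irr _ pe_s).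
Qed.

Lemma prod_factors_irr_factorization :
  irr_factorization g lam [seq (L i, alpha i) | i <- enum 'I_k].
Proof.
split; first by rewrite big_map big_enum.
  by move=> pe /mapP[i _ ->] /=; split; [apply: prime_mirreducible | apply: alpha_gt0].
move=> i1 i2; rewrite size_map size_enum_ord => i1k i2k i12.
rewrite -[i1]/(nat_of_ord (Ordinal i1k)) -[i2]/(nat_of_ord (Ordinal i2k)) !nth_map_ord_enum.
by move/L_assoc_inj/(congr1 val).
Qed.

Lemma irr_factorization_shape mu s : irr_factorization g mu s ->
  size s = k /\ forall pe, pe \in s -> exists i, massociated pe.1 (L i).
Proof.
move=> fac; have [_ s_irr s_dist] := fac.
have shape pe : pe \in s -> exists i, massociated pe.1 (L i).
  move=> pe_s; apply: mirreducible_dvd_factor; first by case: (s_irr _ pe_s).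
  exact: (irr_factorization_dvd fac pe_s).
split=> //.
have [phi phiP] :=
  fin_all_exists (fun t : 'I_(size s) => shape _ (mem_nth (0, 0%N) (ltn_ord t))).
have psi_ex i : exists t : 'I_(size s), massociated (nth (0, 0%N) s t).1 (L i).
  have [pe pe_s peLi] := irr_factorization_assoc fac i.
  have idx_s : (index pe s < size s)%N by rewrite index_mem.
  by exists (Ordinal idx_s); rewrite /= nth_index.
have [psi psiP] := fin_all_exists psi_ex.
have phi_inj : injective phi.
  move=> t1 t2 phiE; apply/val_inj/eqP/negPn/negP => /eqP t12.
  apply: (s_dist _ _ (ltn_ord t1) (ltn_ord t2) t12).
  by apply: massociated_trans (phiP t1) _; rewrite phiE; apply: massociated_sym.
have psi_inj : injective psi.
  move=> i1 i2 psiE; apply: L_assoc_inj.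
  by apply: massociated_trans (massociated_sym (psiP i1)) _; rewrite psiE.
by have := leq_card _ phi_inj; have := leq_card _ psi_inj; rewrite !card_ord; lia.
Qed.

Lemma irr_factorization_reindex (M : 'I_k -> {mpoly K[d]}) (beta t : 'I_k -> _) :
  irr_factorization g lam [seq (M i, beta i) | i <- enum 'I_k] -> M =1 L \o t ->
  injective t /\ beta =1 alpha \o t.
Proof.
move=> [gE _ s_dist] ML.
have size_s : size [seq (M i, beta i) | i <- enum 'I_k] = k by rewrite size_map size_enum_ord.
have t_inj : injective t.
  move=> i1 i2 tE; apply/ord_inj/eqP/negPn/negP => /eqP i12.
  apply: (s_dist _ _ _ _ i12); rewrite ?size_s // !nth_map_ord_enum /= !ML /= tE.
  by exists 1; rewrite oner_eq0 scale1r.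
split=> // i; pose tp := perm t_inj.
suff /(_ (t i)) : alpha =1 beta \o (tp^-1)%g by rewrite /= -(permE t_inj) permK.
apply: prod_primes_exp_inj L_prime L_dvd_inj _; apply: (scalerI lam0).
rewrite [LHS]gE big_map big_enum [in RHS](reindex_inj (@perm_inj _ tp)) /=.
by congr (_ *: _); apply: eq_big => // j _; rewrite permK permE ML.
Qed.
End UniqueFactorization.

Lemma prime_XsubC (R : idomainType) (c : R) : prime_elt ('X - c%:P).
Proof.
have dvdXsubC p : divides ('X - c%:P) p <-> root p c.
  split=> [[q ->]|/factor_theorem[q ->]]; last by exists q; rewrite mulrC.
  by rewrite rootM root_XsubC eqxx.
split; first by rewrite polyXsubC_eq0.
  by rewrite poly_unitE size_XsubC.
by move=> p q /dvdXsubC; rewrite rootM => /orP[] /dvdXsubC; [left|right].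
Qed.

Section Bivariate.
Variable K : fieldType.
Implicit Types a b : K.

(* K[X_0, X_1] is identified with K[X_1][X_0], X_0 being the outer variable. *)
Definition poly2_var (i : 'I_2) : {poly {poly K}} := if i == 0 then 'X else 'X%:P.

Definition mpoly2_to_poly : {rmorphism {mpoly K[2]} -> {poly {poly K}}} :=
  mmap (polyC \o polyC) poly2_var.

Definition poly_to_mpoly2 : {rmorphism {poly {poly K}} -> {mpoly K[2]}} :=
  (horner_eval 'X_0 \o map_poly (horner_eval 'X_1 \o map_poly (@mpolyC 2 K)))%FUN.

Lemma poly_to_mpoly2C (c : K) : poly_to_mpoly2 c%:P%:P = c%:MP.
Proof. by rewrite /= map_polyC /= !horner_evalE map_polyC /= !hornerC. Qed.

Lemma poly_to_mpoly2_var i : poly_to_mpoly2 (poly2_var i) = 'X_i.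
Proof.
case: i => -[|[|//]] i2; rewrite /poly2_var /=.
  by rewrite (_ : Ordinal i2 = 0) ?map_polyX ?horner_evalE ?hornerX //; apply: val_inj.
rewrite (_ : Ordinal i2 = 1); last exact: val_inj.
by rewrite map_polyC /= !horner_evalE hornerC map_polyX hornerX.
Qed.

Lemma mpoly2_to_polyK : cancel mpoly2_to_poly poly_to_mpoly2.
Proof.
move=> p; rewrite [in RHS](mpolyE p) /mpoly2_to_poly /mmap rmorph_sum.
apply: eq_bigr => m _; rewrite rmorphM poly_to_mpoly2C mul_mpolyC.
rewrite [in RHS]mpolyXE_id /mmap1 rmorph_prod; congr (_ *: _); apply: eq_bigr => i _.
by rewrite rmorphXn poly_to_mpoly2_var.
Qed.

Lemma mpoly2_to_poly_lin2 a b : a != 0 ->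
  mpoly2_to_poly (lin2 a b) = a%:P%:P * ('X - (- a^-1 *: (b *: 'X + 1))%:P).
Proof.
move=> a0; rewrite /lin2 !rmorphD rmorph1 /= !mmapZ !mmapX !mmap1U /poly2_var /=.
rewrite scaleNr polyCN opprK mulrDr -[X in _ = _ + X]polyCM [X in _ = _ + X%:P]mul_polyC.
rewrite scalerA mulfV // scale1r polyCD polyC1 -addrA; congr (_ + (_ + _)).
by rewrite -polyCM mul_polyC.
Qed.

Lemma prime_lin2 a b : a != 0 -> prime_elt (lin2 a b).
Proof.
move=> a0; apply: (prime_elt_retract mpoly2_to_polyK).
rewrite mpoly2_to_poly_lin2 //; apply: prime_eltMl (prime_XsubC _).
by rewrite poly_unitE size_polyC polyC_eq0 a0 coefC poly_unitE size_polyC a0 coefC unitfE.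
Qed.

Lemma lin2_coef a b m : (lin2 a b)@_m =
  a * (mnm1 0 == m)%:R + b * (mnm1 1 == m)%:R + (m == 0%MM)%:R.
Proof. by rewrite /lin2 !mcoeffD !mcoeffZ !mcoeffX mcoeff1. Qed.

Lemma massociated_lin2 a b a' b' : massociated (lin2 a b) (lin2 a' b') -> a = a' /\ b = b'.
Proof.
case=> c [_ E]; have := congr1 (mcoeff 0%MM) E; have := congr1 (mcoeff (mnm1 0)) E.
have := congr1 (mcoeff (mnm1 1)) E; rewrite /= !mcoeffZ !lin2_coef !eq_mnm1 !mnm1_eq0 !eqxx /=.
by rewrite !mulr0 !mulr1 !addr0 !add0r => -> -> c1; rewrite -[c]mulr1 -c1 !mul1r.
Qed.
End Bivariate.

Section Projection.
Variables (K : fieldType) (n : nat) (x1 xn : 'I_n).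
Hypotheses (x1_val : val x1 = 0%N) (xn_val : val xn = n.-1).
Implicit Types j m : 'I_n.

Lemma comp_mpolyX_pi j m : 'X_m \mPo pi_tuple K j =
  if val m == 0%N then 'X_0 else if m == j then 'X_1 else if val m == n.-1 then 1 else 0.
Proof. by rewrite comp_mpolyXU -tnth_nth tnth_mktuple. Qed.

Lemma comp_linform_pi (c : 'I_n -> K) j : mid_index j -> c xn = 1 ->
  linform c \mPo pi_tuple K j = lin2 (c x1) (c j).
Proof.
move=> /andP[j_gt0 j_lt] cxn.
have jx1 : j != x1 by apply: contraTneq j_gt0 => ->; rewrite x1_val.
have xnj : xn != j by apply: contraTneq j_lt => <-; rewrite xn_val ltnn.
have xnx1 : xn != x1 by rewrite -val_eqE xn_val x1_val; apply/eqP; lia.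
rewrite /linform raddf_sum (bigD1 x1) //= (bigD1 j) //= (bigD1 xn) /=; last by rewrite xnx1 xnj.
rewrite big1 => [|m /andP[/andP[mx1 mj] mxn]]; last first.
  rewrite comp_mpolyZ comp_mpolyX_pi (negbTE mj).
  rewrite (_ : (val m == 0%N) = false); last by apply: contraNF mx1; rewrite -val_eqE x1_val.
  rewrite (_ : (val m == n.-1) = false) ?scaler0 //.
  by apply: contraNF mxn; rewrite -val_eqE xn_val.
rewrite !comp_mpolyZ !comp_mpolyX_pi x1_val xn_val eqxx (negbTE xnj) eqxx cxn.
rewrite (_ : (val j == 0%N) = false); last by apply/eqP; lia.
by rewrite (_ : (n.-1 == 0%N) = false) ?eqxx ?scale1r ?addr0 ?addrA //; apply/eqP; lia.
Qed.

Lemma gproj_prodlin k lam (l : 'I_k -> 'I_n -> K) alpha j :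
  mid_index j -> (forall i, l i xn = 1) ->
  gproj (prodlin lam l alpha) j = lam *: \prod_i lin2 (l i x1) (l i j) ^+ alpha i.
Proof.
move=> j_mid l_xn; rewrite /gproj /prodlin comp_mpolyZ rmorph_prod; congr (_ *: _).
by apply: eq_bigr => i _; rewrite rmorphXn; congr (_ ^+ _); apply: comp_linform_pi.
Qed.
End Projection.

Lemma prodlin_reindex (K : fieldType) n k lam (l l' : 'I_k -> 'I_n -> K)
    (alpha alpha' : 'I_k -> nat) (tau : {perm 'I_k}) :
  (forall i m, l' i m = l (tau i) m) -> alpha' =1 alpha \o tau ->
  prodlin lam l' alpha' = prodlin lam l alpha.
Proof.
move=> l'E alpha'E; rewrite /prodlin [in RHS](reindex_inj (@perm_inj _ tau)) /=.
congr (_ *: _); apply: eq_bigr => i _; rewrite alpha'E /linform; congr (_ ^+ _).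
by apply: eq_bigr => m _; rewrite l'E.
Qed.

Section Algorithm.
Variables (K : fieldType) (n k : nat) (lam : K).
Variables (l : 'I_k -> 'I_n -> K) (alpha : 'I_k -> nat) (x1 xn : 'I_n).
Hypotheses (x1_val : val x1 = 0%N) (xn_val : val xn = n.-1).
Hypotheses (l_x1_inj : injective (l^~ x1)) (l_xn : forall i, l i xn = 1).
Local Notation f := (prodlin lam l alpha).

Section Factorizations.
Hypotheses (lam0 : lam != 0) (alpha_gt0 : forall i, (0 < alpha i)%N).
Hypothesis l_x1_neq0 : forall i, l i x1 != 0.
Let L j i := lin2 (l i x1) (l i j).

Let L_prime j i : prime_elt (L j i).
Proof. exact: prime_lin2. Qed.

Let L_assoc_inj j i i' : massociated (L j i) (L j i') -> i = i'.
Proof. by case/massociated_lin2 => /l_x1_inj. Qed.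

Let gprojE j : mid_index j -> gproj f j = lam *: \prod_i L j i ^+ alpha i.
Proof. by move=> j_mid; rewrite (gproj_prodlin x1_val xn_val). Qed.

Lemma gproj_irr_factorization_shape j : mid_index j ->
  forall mu s, irr_factorization (gproj f j) mu s ->
  size s = k /\ forall pe, pe \in s -> exists a b, massociated pe.1 (lin2 a b).
Proof.
move=> j_mid mu s; rewrite gprojE // => fac.
have [-> shape] := irr_factorization_shape lam0 alpha_gt0 (L_prime j) (@L_assoc_inj j) fac.
by split=> // pe /shape[i iP]; exists (l i x1), (l i j).
Qed.

Lemma gproj_irr_factorization j : mid_index j ->
  irr_factorization (gproj f j) lam [seq (lin2 (l i x1) (l i j), alpha i) | i <- enum 'I_k].
Proof.
move=> j_mid; rewrite gprojE //.
exact: (prod_factors_irr_factorization lam alpha_gt0 (L_prime j) (@L_assoc_inj j)).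
Qed.

Lemma gproj_factor_matching j (a b : 'I_k -> K) beta : mid_index j ->
  irr_factorization (gproj f j) lam [seq (lin2 (a i) (b i), beta i) | i <- enum 'I_k] ->
  exists t : {perm 'I_k}, forall i, [/\ a i = l (t i) x1, b i = l (t i) j & beta i = alpha (t i)].
Proof.
move=> j_mid; rewrite gprojE // => fac; have [_ s_irr _] := fac.
have match_i i : exists t, a i = l t x1 /\ b i = l t j.
  have pe_s : (lin2 (a i) (b i), beta i) \in [seq (lin2 (a i) (b i), beta i) | i <- enum 'I_k].
    by apply: map_f; rewrite mem_enum.
  have [t /massociated_lin2 abt] := mirreducible_dvd_factor lam0 (L_prime j)
    (proj1 (s_irr _ pe_s)) (irr_factorization_dvd fac pe_s).
  by exists t.
have [t tP] := fin_all_exists match_i.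
have Mt : (fun i => lin2 (a i) (b i)) =1 L j \o t by move=> i; have [-> ->] := tP i.
have [t_inj betaE] := irr_factorization_reindex lam0 (L_prime j) (@L_assoc_inj j) fac Mt.
by exists (perm t_inj) => i; rewrite permE; have [-> ->] := tP i; split=> //; apply: betaE.
Qed.

Lemma gproj_factor_matchings (a b : 'I_n -> 'I_k -> K) beta :
  (forall j, mid_index j ->
     irr_factorization (gproj f j) lam [seq (lin2 (a j i) (b j i), beta j i) | i <- enum 'I_k]) ->
  exists T : 'I_n -> {perm 'I_k}, forall j, mid_index j -> forall i,
    [/\ a j i = l (T j i) x1, b j i = l (T j i) j & beta j i = alpha (T j i)].
Proof.
move=> fac; have match_j j : exists t : {perm 'I_k}, mid_index j -> forall i,
    [/\ a j i = l (t i) x1, b j i = l (t i) j & beta j i = alpha (t i)].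
  case: (boolP (mid_index j)) => [j_mid|_]; last by exists 1%g.
  by have [t tP] := gproj_factor_matching j_mid (fac j j_mid); exists t.
by have [T TP] := fin_all_exists match_j; exists T.
Qed.

End Factorizations.

Section Reordering.
Variables (a b : 'I_n -> 'I_k -> K) (beta : 'I_n -> 'I_k -> nat) (T : 'I_n -> {perm 'I_k}).
Hypothesis T_match : forall j, mid_index j -> forall i,
  [/\ a j i = l (T j i) x1, b j i = l (T j i) j & beta j i = alpha (T j i)].

Lemma reordering_exists : exists sigma : 'I_n -> {perm 'I_k},
  forall j j' i, mid_index j -> mid_index j' -> a j (sigma j i) = a j' (sigma j' i).
Proof.
exists (fun j => (T j)^-1)%g => j j' i j_mid j'_mid.
have [-> _ _] := T_match j_mid ((T j)^-1 i)%g.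
by have [-> _ _] := T_match j'_mid ((T j')^-1 i)%g; rewrite !permKV.
Qed.

Variable sigma : 'I_n -> {perm 'I_k}.
Hypothesis sigma_align :
  forall j j' i, mid_index j -> mid_index j' -> a j (sigma j i) = a j' (sigma j' i).
Variable j0 : 'I_n.
Hypothesis j0_mid : mid_index j0.
Let tau := (sigma j0 * T j0)%g.

Let T_sigma j i : mid_index j -> T j (sigma j i) = tau i.
Proof.
move=> j_mid; apply: l_x1_inj; rewrite permM /=.
have [<- _ _] := T_match j_mid (sigma j i).
by have [<- _ _] := T_match j0_mid (sigma j0 i); apply: sigma_align.
Qed.

Let beta_sigma j i : mid_index j -> beta j (sigma j i) = alpha (tau i).
Proof. by move=> j_mid; have [_ _ ->] := T_match j_mid (sigma j i); rewrite T_sigma. Qed.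

Let outlin_sigma i m : outlin (a j0 (sigma j0 i)) (fun m => b m (sigma m i)) m = l (tau i) m.
Proof.
rewrite /outlin; case: ifP => [/eqP m0|m_neq0].
  rewrite (_ : m = x1); last by apply: val_inj; rewrite x1_val.
  by have [-> _ _] := T_match j0_mid (sigma j0 i); rewrite T_sigma.
case: ifP => [/eqP mn|mn].
  by rewrite (_ : m = xn) ?l_xn //; apply: val_inj; rewrite xn_val.
have m_mid : mid_index m.
  have m_lt : (val m < n)%N := ltn_ord m.
  by move/negbT: m_neq0; move/negbT: mn; rewrite /mid_index; lia.
by have [_ -> _] := T_match m_mid (sigma m i); rewrite T_sigma.
Qed.

Lemma algorithm_output :
  (forall j i, mid_index j -> beta j (sigma j i) = beta j0 (sigma j0 i)) /\
  prodlin lam (fun i => outlin (a j0 (sigma j0 i)) (fun m => b m (sigma m i)))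
    (fun i => beta j0 (sigma j0 i)) = f /\
  exists tau : {perm 'I_k}, forall i,
    (forall m, outlin (a j0 (sigma j0 i)) (fun m => b m (sigma m i)) m = l (tau i) m) /\
    beta j0 (sigma j0 i) = alpha (tau i).
Proof.
split; first by move=> j i j_mid; rewrite !beta_sigma.
split; first exact: (prodlin_reindex lam outlin_sigma (fun i => @beta_sigma j0 i j0_mid)).
by exists tau => i; rewrite beta_sigma.
Qed.

End Reordering.
End Algorithm.

Theorem proposition7 (K : fieldType) (n k : nat) (lam : K)
    (l : 'I_k -> 'I_n -> K) (alpha : 'I_k -> nat) :
  infinite_field K ->
  (4 <= n)%N ->
  lam != 0 ->
  (forall i, (0 < alpha i)%N) ->
  (forall i i', i != i' -> ~ proportional (l i) (l i')) ->
  (* hypothesis ( * ) *)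
  (forall i (m : 'I_n), val m = 0%N -> l i m != 0) ->
  (forall i i' (m : 'I_n), val m = 0%N -> i != i' -> l i m != l i' m) ->
  (forall i (m : 'I_n), val m = n.-1 -> l i m = 1) ->
  let f := prodlin lam l alpha in
  (* Step 2: every irreducible factorization of g_j has the displayed shape *)
  (forall j : 'I_n, mid_index j ->
     forall (mu : K) (s : seq ({mpoly K[2]} * nat)),
       irr_factorization (gproj f j) mu s ->
       size s = k /\
       forall pe, pe \in s -> exists a b : K, massociated pe.1 (lin2 a b)) /\
  (* ... and a factorization of the displayed shape exists *)
  (exists (a b : 'I_n -> 'I_k -> K) (beta : 'I_n -> 'I_k -> nat),
     forall j : 'I_n, mid_index j ->
       irr_factorization (gproj f j) lam
         [seq (lin2 (a j i) (b j i), beta j i) | i <- enum 'I_k]) /\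
  (* Steps 3 and 4: for any outputs of step 2 of that shape ... *)
  (forall (a b : 'I_n -> 'I_k -> K) (beta : 'I_n -> 'I_k -> nat),
     (forall j : 'I_n, mid_index j ->
        irr_factorization (gproj f j) lam
          [seq (lin2 (a j i) (b j i), beta j i) | i <- enum 'I_k]) ->
     (* the reordering of step 3 is possible ... *)
     (exists sigma : 'I_n -> {perm 'I_k},
        forall (j j' : 'I_n) (i : 'I_k), mid_index j -> mid_index j' ->
          a j (sigma j i) = a j' (sigma j' i)) /\
     (* ... and for any such reordering, exponents agree and the output of
        step 4 equals f, and is the given factorization up to permutation *)
     (forall sigma : 'I_n -> {perm 'I_k},
        (forall (j j' : 'I_n) (i : 'I_k), mid_index j -> mid_index j' ->
           a j (sigma j i) = a j' (sigma j' i)) ->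
        forall j0 : 'I_n, mid_index j0 ->
        let A := fun i => a j0 (sigma j0 i) in
        let c := fun i (m : 'I_n) => b m (sigma m i) in
        let gam := fun i => beta j0 (sigma j0 i) in
        (forall (j : 'I_n) (i : 'I_k), mid_index j -> beta j (sigma j i) = gam i) /\
        prodlin lam (fun i => outlin (A i) (c i)) gam = f /\
        exists tau : {perm 'I_k}, forall i,
          (forall m, outlin (A i) (c i) m = l (tau i) m) /\ gam i = alpha (tau i))).
Proof.
move=> _ n_ge4 lam0 alpha_gt0 _ l_x1_neq0 l_x1_neq l_xn f.
have n_gt0 : (0 < n)%N by lia.
have n1_lt : (n.-1 < n)%N by rewrite ltn_predL.
pose x1 := Ordinal n_gt0; pose xn := Ordinal n1_lt.
have x1_val : val x1 = 0%N by [].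
have xn_val : val xn = n.-1 by [].
have x1_neq0 i : l i x1 != 0 := l_x1_neq0 i x1 x1_val.
have x1_inj : injective (l^~ x1) by move=> i i'; exact: contra_eq (l_x1_neq i i' x1 x1_val).
have xn_1 i : l i xn = 1 := l_xn i xn xn_val.
split; [|split].
- exact: gproj_irr_factorization_shape x1_val xn_val x1_inj xn_1 lam0 alpha_gt0 x1_neq0.
- exists (fun _ i => l i x1), (fun j i => l i j), (fun _ => alpha).
  exact: (gproj_irr_factorization lam x1_val xn_val x1_inj xn_1 alpha_gt0 x1_neq0).
move=> a b beta /(gproj_factor_matchings x1_val xn_val x1_inj xn_1 lam0 x1_neq0) [T T_match].
split; first exact: reordering_exists T_match.
move=> sigma sigma_align j0 j0_mid.
exact: (algorithm_output lam x1_val xn_val x1_inj xn_1 T_match sigma_align j0_mid).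
Qed.
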